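(* Let $H$ be a complex separable Hilbert space and let $S\in B(H)$ have Cartesian decomposition $S=A+iC$ ($A,C$ self-adjoint) with $A$ and $C$ positive. Then $$\|S^*S-SS^*\|\le \frac12\left(\|A\|^2+\|C\|^2\right).$$
   Context: $B(H)$ denotes the algebra of bounded linear operators on $H$ with the operator norm. The Cartesian decomposition of $S\in B(H)$ is $S=A+iC$ with $A=\frac{S+S^*}{2}$ and $C=\frac{S-S^*}{2i}$ self-adjoint. *)

From HB Require Import structures.
From mathcomp Require Import all_boot all_order all_algebra.
From mathcomp Require Import all_classical all_reals.
From mathcomp Require Import complex.
Set Implicit Arguments. Unset Strict Implicit. Unset Printing Implicit Defensive.
Import Order.TTheory GRing.Theory Num.Theory.
Local Open Scope ring_scope.
Local Open Scope classical_set_scope.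

Section Hilbert.
Variables (R : realType) (V : lmodType R[i]) (ip : V -> V -> R[i]).

Definition is_inner_product : Prop :=
  [/\ (forall (a : R[i]) (x y z : V), ip (a *: x + y) z = a * ip x z + ip y z),
      (forall x y : V, ip y x = (ip x y)^*),
      (forall x : V, 0 <= ip x x) &
      (forall x : V, ip x x = 0 -> x = 0)].

Definition hnorm (x : V) : R := Num.sqrt (complex.Re (ip x x)).

Definition hcomplete : Prop :=
  forall u : nat -> V,
    (forall eps : R, 0 < eps -> exists N : nat,
        forall m n : nat, (N <= m)%N -> (N <= n)%N -> hnorm (u m - u n) < eps) ->
    exists l : V, forall eps : R, 0 < eps -> exists N : nat,
        forall n : nat, (N <= n)%N -> hnorm (u n - l) < eps.

Definition hseparable : Prop :=
  exists d : nat -> V, forall (x : V) (eps : R), 0 < eps ->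
    exists n : nat, hnorm (x - d n) < eps.

Definition is_separable_hilbert : Prop :=
  [/\ is_inner_product, hcomplete & hseparable].

Definition bounded_linear (T : V -> V) : Prop :=
  (forall (a : R[i]) (x y : V), T (a *: x + y) = a *: T x + T y) /\
  exists M : R, forall x : V, hnorm (T x) <= M * hnorm x.

Definition is_adjoint (T Ts : V -> V) : Prop :=
  forall x y : V, ip (T x) y = ip x (Ts y).

Definition positive_op (T : V -> V) : Prop := forall x : V, 0 <= ip (T x) x.

Definition opnorm (T : V -> V) : R :=
  sup [set hnorm (T x) | x in [set x : V | hnorm x <= 1]].

End Hilbert.

From HB Require Import structures.
From mathcomp Require Import all_boot all_order all_algebra.
From mathcomp Require Import all_classical all_reals.
From mathcomp Require Import complex.
From mathcomp Require Import ring lra.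
Import Order.TTheory GRing.Theory Num.Theory.
Local Open Scope ring_scope.

(* Write S = A + iC.  Then S^*S - SS^* = 2i(AC - CA), and the commutator AC - CA
   does not change when A and C are replaced by A - ||A||/2 and C - ||C||/2.
   For a positive operator T, Cauchy-Schwarz for the form <T., .> gives
   ||T x||^2 <= ||T|| <T x, x>, hence ||T - ||T||/2|| <= ||T||/2.  Therefore
   ||S^*S - SS^*|| <= 2 (||A||/2 ||C||/2 + ||C||/2 ||A||/2) = ||A|| ||C||,
   which is at most (||A||^2 + ||C||^2)/2. *)

Lemma discriminant_le_of_quadratic_ge0 (R : realFieldType) (p q r : R) :
  0 <= r -> (forall t, 0 <= p - 2 * t * q + t ^+ 2 * r) -> q ^+ 2 <= p * r.
Proof.
rewrite le_eqVlt => /predU1P[<- | r_gt0] quad_ge0; last first.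
  have := quad_ge0 (q / r).
  have -> : p - 2 * (q / r) * q + (q / r) ^+ 2 * r = (p * r - q ^+ 2) / r.
    by field; rewrite gt_eqF.
  by rewrite pmulr_lge0 ?invr_gt0 // subr_ge0.
have [-> | q_neq0] := eqVneq q 0; first by rewrite expr0n mulr0.
have := quad_ge0 ((p + 1) / (2 * q)).
have -> : p - 2 * ((p + 1) / (2 * q)) * q + ((p + 1) / (2 * q)) ^+ 2 * 0 = -1.
  by field.
by rewrite oppr_ge0 ler10.
Qed.

Lemma normc_ge0 (R : rcfType) (c : R[i]) : 0 <= Normc.normc c.
Proof. by case: c => a b; apply: sqrtr_ge0. Qed.

Lemma normcE (R : rcfType) (c : R[i]) : (Normc.normc c)%:C%C = `|c|.
Proof. by rewrite normc_def; case: c. Qed.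

Lemma normc_real (R : rcfType) (t : R) : Normc.normc t%:C%C = `|t|.
Proof. by rewrite /= expr0n addr0 sqrtr_sqr. Qed.

Section InnerProduct.
Variables (R : realType) (V : lmodType R[i]) (ip : V -> V -> R[i]).
Hypothesis ip_linear :
  forall (a : R[i]) (x y z : V), ip (a *: x + y) z = a * ip x z + ip y z.
Hypothesis ip_conj : forall x y : V, ip y x = (ip x y)^*.
Hypothesis ip_ge0 : forall x : V, 0 <= ip x x.
Hypothesis ip_eq0 : forall x : V, ip x x = 0 -> x = 0.

Local Notation nrm := (hnorm ip).
Implicit Types (x y z : V) (P Q T : V -> V).

Lemma ip0l z : ip 0 z = 0.
Proof.
have := ip_linear 1 0 0 z; rewrite scaler0 addr0 mul1r => ip0_twice.
by apply: (addrI (ip 0 z)); rewrite addr0 -ip0_twice.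
Qed.

Lemma ipDl x y z : ip (x + y) z = ip x z + ip y z.
Proof. by have := ip_linear 1 x y z; rewrite scale1r mul1r. Qed.

Lemma ipZl a x z : ip (a *: x) z = a * ip x z.
Proof. by rewrite -[a *: x]addr0 ip_linear ip0l addr0. Qed.

Lemma ipNl x z : ip (- x) z = - ip x z.
Proof. by rewrite -scaleN1r ipZl mulN1r. Qed.

Lemma ipBl x y z : ip (x - y) z = ip x z - ip y z.
Proof. by rewrite ipDl ipNl. Qed.

Lemma ipDr x y z : ip z (x + y) = ip z x + ip z y.
Proof. by rewrite !(ip_conj _ z) ipDl rmorphD. Qed.

Lemma ipZr a x z : ip z (a *: x) = a^* * ip z x.
Proof. by rewrite !(ip_conj _ z) ipZl rmorphM. Qed.

Lemma ipNr x z : ip z (- x) = - ip z x.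
Proof. by rewrite !(ip_conj _ z) ipNl rmorphN. Qed.

Lemma ipBr x y z : ip z (x - y) = ip z x - ip z y.
Proof. by rewrite ipDr ipNr. Qed.

Lemma ip_injl u w : (forall z, ip u z = ip w z) -> u = w.
Proof.
move=> eq_uw; apply/eqP; rewrite -subr_eq0; apply/eqP/ip_eq0.
by rewrite ipBl eq_uw -ipBl subrr ip0l.
Qed.

Definition rip x y := complex.Re (ip x y).

Lemma ripC x y : rip x y = rip y x.
Proof. by rewrite /rip ip_conj; case: (ip y x). Qed.

Lemma ripDl x y z : rip (x + y) z = rip x z + rip y z.
Proof. by rewrite /rip ipDl raddfD. Qed.

Lemma ripNl x z : rip (- x) z = - rip x z.
Proof. by rewrite /rip ipNl raddfN. Qed.

Lemma ripBl x y z : rip (x - y) z = rip x z - rip y z.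
Proof. by rewrite ripDl ripNl. Qed.

Lemma ripZl (t : R) x z : rip (t%:C%C *: x) z = t * rip x z.
Proof. by rewrite /rip ipZl; case: (ip x z) => a b /=; rewrite mul0r subr0. Qed.

Lemma ripDr x y z : rip z (x + y) = rip z x + rip z y.
Proof. by rewrite ripC ripDl !(ripC z). Qed.

Lemma ripBr x y z : rip z (x - y) = rip z x - rip z y.
Proof. by rewrite ripC ripBl !(ripC z). Qed.

Lemma ripZr (t : R) x z : rip z (t%:C%C *: x) = t * rip z x.
Proof. by rewrite ripC ripZl ripC. Qed.

Lemma rip_ge0 [x y] : 0 <= ip x y -> 0 <= rip x y.
Proof. by rewrite /rip lecE => /andP[]. Qed.

Lemma rip_xx_ge0 x : 0 <= rip x x.
Proof. exact: rip_ge0. Qed.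

Lemma ip_real x : ip x x = (rip x x)%:C%C.
Proof. exact/esym/RRe_real/ger0_real. Qed.

Lemma hnorm_ge0 x : 0 <= nrm x.
Proof. exact: sqrtr_ge0. Qed.

Lemma sqr_hnorm x : nrm x ^+ 2 = rip x x.
Proof. exact/sqr_sqrtr/rip_xx_ge0. Qed.

Lemma hnorm0 : nrm 0 = 0.
Proof. by rewrite /hnorm ip0l sqrtr0. Qed.

Lemma hnorm_eq0 x : nrm x = 0 -> x = 0.
Proof. by move=> x0; apply: ip_eq0; rewrite ip_real -sqr_hnorm x0 expr0n. Qed.

Lemma rip_le_hnormM x y : rip x y <= nrm x * nrm y.
Proof.
apply: le_trans (ler_norm _) _.
rewrite -ler_sqr ?nnegrE ?mulr_ge0 ?hnorm_ge0 //.
rewrite real_normK ?num_real // exprMn !sqr_hnorm.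
apply: discriminant_le_of_quadratic_ge0; first by rewrite -sqr_hnorm sqr_ge0.
move=> t; have := rip_xx_ge0 (x - t%:C%C *: y).
by rewrite !(ripBl, ripBr, ripZl, ripZr) (ripC y x); lra.
Qed.

Lemma hnormD_le x y : nrm (x + y) <= nrm x + nrm y.
Proof.
rewrite -ler_sqr ?nnegrE ?addr_ge0 ?hnorm_ge0 // sqr_hnorm !(ripDl, ripDr).
rewrite (ripC y x) sqrrD !sqr_hnorm; have := rip_le_hnormM x y; lra.
Qed.

Lemma hnormZ c x : nrm (c *: x) = Normc.normc c * nrm x.
Proof.
apply/eqP; rewrite -(eqrXn2 (_ : 0 < 2)%N) ?mulr_ge0 ?hnorm_ge0 ?normc_ge0 //.
rewrite exprMn !sqr_hnorm /rip ipZl ipZr ip_real.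
by case: c => a b /=; rewrite sqr_sqrtr ?addr_ge0 ?sqr_ge0 //; apply/eqP; ring.
Qed.

Lemma hnormN x : nrm (- x) = nrm x.
Proof. by rewrite /hnorm ipNl ipNr opprK. Qed.

Lemma hnormB_le x y : nrm (x - y) <= nrm x + nrm y.
Proof. by rewrite -(hnormN y) hnormD_le. Qed.

Lemma lin0 [T] : linear T -> T 0 = 0.
Proof.
move=> T_lin; have := T_lin 1 0 0; rewrite scaler0 addr0 scale1r => T0_twice.
by apply: (addrI (T 0)); rewrite addr0 -T0_twice.
Qed.

Lemma linD [T] : linear T -> forall x y, T (x + y) = T x + T y.
Proof. by move=> T_lin x y; rewrite -[x]scale1r T_lin !scale1r. Qed.

Lemma linZ [T] : linear T -> forall a x, T (a *: x) = a *: T x.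
Proof. by move=> T_lin a x; rewrite -[a *: x]addr0 T_lin (lin0 T_lin) addr0. Qed.

Lemma linN [T] : linear T -> forall x, T (- x) = - T x.
Proof. by move=> T_lin x; rewrite -scaleN1r (linZ T_lin) scaleN1r. Qed.

Lemma linB [T] : linear T -> forall x y, T (x - y) = T x - T y.
Proof. by move=> T_lin x y; rewrite (linD T_lin) (linN T_lin). Qed.

Lemma linear_opp [T] : linear T -> linear (fun x => - T x).
Proof. by move=> T_lin a x y; rewrite T_lin opprD scalerN. Qed.

Lemma linear_scale_add a [P Q] :
  linear P -> linear Q -> linear (fun x => a *: (P x + Q x)).
Proof.
move=> P_lin Q_lin b x y; rewrite P_lin Q_lin addrACA scalerDr !scalerDr.
by rewrite !scalerA mulrC.
Qed.

Definition bounded_op T := exists M : R, forall x, nrm (T x) <= M * nrm x.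

Lemma bounded_opp [T] : bounded_op T -> bounded_op (fun x => - T x).
Proof. by move=> [M T_le]; exists M => x; rewrite hnormN. Qed.

Lemma bounded_scale_add a [P Q] :
  bounded_op P -> bounded_op Q -> bounded_op (fun x => a *: (P x + Q x)).
Proof.
move=> [M P_le] [M' Q_le]; exists (Normc.normc a * (M + M')) => x.
rewrite hnormZ -mulrA ler_wpM2l ?normc_ge0 // mulrDl.
exact: le_trans (hnormD_le _ _) (lerD (P_le x) (Q_le x)).
Qed.

Lemma has_ubound_unit_image T :
  bounded_op T -> has_ubound [set nrm (T x) | x in [set x | nrm x <= 1]]%classic.
Proof.
move=> [M T_le]; exists `|M| => _ [x /= x_le1 <-].
apply: le_trans (T_le x) _; apply: le_trans (ler_norm _) _.
by rewrite normrM (ger0_norm (hnorm_ge0 x)) ler_piMr.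
Qed.

Lemma opnorm_ge0 [T] : linear T -> bounded_op T -> 0 <= opnorm ip T.
Proof.
move=> T_lin /has_ubound_unit_image T_ub; apply: (ub_le_sup T_ub).
by exists 0; rewrite /= ?(lin0 T_lin) hnorm0 ?ler01.
Qed.

Lemma hnorm_le_opnorm T x :
  linear T -> bounded_op T -> nrm (T x) <= opnorm ip T * nrm x.
Proof.
move=> T_lin /has_ubound_unit_image T_ub.
have [/hnorm_eq0 -> | x_neq0] := eqVneq (nrm x) 0.
  by rewrite (lin0 T_lin) !hnorm0 mulr0.
have x_gt0 : 0 < nrm x by rewrite lt_def x_neq0 hnorm_ge0.
have hnorm_normalize z : nrm ((nrm x)^-1%:C%C *: z) = (nrm x)^-1 * nrm z.
  by rewrite hnormZ normc_real ger0_norm // invr_ge0 hnorm_ge0.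
rewrite -ler_pdivrMr // mulrC -hnorm_normalize -(linZ T_lin).
apply: (ub_le_sup T_ub); exists ((nrm x)^-1%:C%C *: x) => //=.
by rewrite hnorm_normalize mulVf.
Qed.

Lemma opnorm_le_ub T b : (forall x, nrm x <= 1 -> nrm (T x) <= b) -> opnorm ip T <= b.
Proof.
move=> T_le; apply: ge_sup => [|_ [x /= x_le1 <-]]; last exact: T_le.
by exists (nrm (T 0)), 0; rewrite //= hnorm0 ler01.
Qed.

Definition bounded_positive_op T :=
  [/\ linear T, bounded_op T, is_adjoint ip T T & positive_op ip T].

Lemma sqr_hnorm_le_opnorm_rip [T] x :
  bounded_positive_op T -> nrm (T x) ^+ 2 <= opnorm ip T * rip (T x) x.
Proof.
case=> T_lin T_bnd T_sa T_pos; set a := opnorm ip T.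
have a_ge0 : 0 <= a := opnorm_ge0 T_lin T_bnd.
have rip_T_ge0 u : 0 <= rip (T u) u := rip_ge0 (T_pos u).
have rip_T_sym u v : rip (T u) v = rip u (T v) by rewrite /rip T_sa.
set p := rip (T x) x; set q := rip (T x) (T x); set r := rip (T (T x)) (T x).
(* Cauchy-Schwarz for the semi-definite form (u, v) |-> Re <T u, v>, at x and T x *)
have q_sqr_le : q ^+ 2 <= p * r.
  apply: discriminant_le_of_quadratic_ge0 (rip_T_ge0 (T x)) _ => t.
  have := rip_T_ge0 (x - t%:C%C *: T x).
  rewrite (linB T_lin) (linZ T_lin) !(ripBl, ripBr, ripZl, ripZr) (rip_T_sym (T x) x).
  by rewrite -/p -/q -/r; lra.
have r_le : r <= a * q.
  apply: le_trans (rip_le_hnormM _ _) _.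
  by rewrite /q -sqr_hnorm expr2 mulrA ler_wpM2r ?hnorm_ge0 ?hnorm_le_opnorm.
have p_ge0 : 0 <= p := rip_T_ge0 x.
rewrite sqr_hnorm -/q; have [-> | q_neq0] := eqVneq q 0; first exact: mulr_ge0.
have q_gt0 : 0 < q by rewrite lt_def q_neq0 rip_xx_ge0.
rewrite -(ler_pM2r q_gt0) -expr2; apply: le_trans q_sqr_le _.
by rewrite -mulrA mulrCA ler_wpM2l.
Qed.

Lemma hnorm_sub_half_opnorm_le [T] x : bounded_positive_op T ->
  nrm (T x - (opnorm ip T / 2)%:C%C *: x) <= opnorm ip T / 2 * nrm x.
Proof.
move=> T_bpos; have [T_lin T_bnd _ _] := T_bpos.
have a_ge0 := opnorm_ge0 T_lin T_bnd.
rewrite -ler_sqr ?nnegrE ?mulr_ge0 ?invr_ge0 ?hnorm_ge0 // exprMn !sqr_hnorm.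
rewrite !(ripBl, ripBr, ripZl, ripZr) (ripC x (T x)) -sqr_hnorm.
have := sqr_hnorm_le_opnorm_rip x T_bpos; lra.
Qed.

Lemma commutator_shift [P Q] (a b : R[i]) x : linear P -> linear Q ->
  P (Q x) - Q (P x) =
  (P (Q x - b *: x) - a *: (Q x - b *: x)) - (Q (P x - a *: x) - b *: (P x - a *: x)).
Proof.
move=> P_lin Q_lin; apply: ip_injl => z.
by rewrite !(linB P_lin, linZ P_lin, linB Q_lin, linZ Q_lin) !(ipBl, ipZl); ring.
Qed.

Lemma hnorm_commutator_le [P Q] x :
  bounded_positive_op P -> bounded_positive_op Q ->
  nrm (P (Q x) - Q (P x)) <= opnorm ip P * opnorm ip Q / 2 * nrm x.
Proof.
move=> P_bpos Q_bpos; have [P_lin _ _ _] := P_bpos; have [Q_lin _ _ _] := Q_bpos.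
have shifted_le U W : bounded_positive_op U -> bounded_positive_op W ->
    nrm (U (W x - (opnorm ip W / 2)%:C%C *: x)
         - (opnorm ip U / 2)%:C%C *: (W x - (opnorm ip W / 2)%:C%C *: x))
    <= opnorm ip U / 2 * (opnorm ip W / 2 * nrm x).
  move=> U_bpos W_bpos; have [U_lin U_bnd _ _] := U_bpos.
  apply: le_trans (hnorm_sub_half_opnorm_le _ U_bpos) _.
  by rewrite ler_wpM2l ?divr_ge0 ?opnorm_ge0 ?hnorm_sub_half_opnorm_le.
rewrite (commutator_shift (opnorm ip P / 2)%:C%C (opnorm ip Q / 2)%:C%C x
          P_lin Q_lin).
apply: le_trans (hnormB_le _ _) _.
set a := opnorm ip P; set b := opnorm ip Q.
have -> : a * b / 2 * nrm x = a / 2 * (b / 2 * nrm x) + b / 2 * (a / 2 * nrm x).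
  by field.
exact: lerD (shifted_le P Q P_bpos Q_bpos) (shifted_le Q P Q_bpos P_bpos).
Qed.

Section Cartesian.
Variables S Sst : V -> V.
Hypotheses (S_linear : linear S) (S_bounded : bounded_op S).
Hypothesis S_adjoint : is_adjoint ip S Sst.

Lemma adjoint_ip x y : ip (Sst x) y = ip x (S y).
Proof. by rewrite ip_conj -S_adjoint -ip_conj. Qed.

Lemma adjoint_linear : linear Sst.
Proof.
move=> a x y; apply: ip_injl => z.
by rewrite adjoint_ip !ip_linear !adjoint_ip.
Qed.

Lemma adjoint_bounded : bounded_op Sst.
Proof.
have [M S_le] := S_bounded; exists `|M| => y.
have S_le_abs x : nrm (S x) <= `|M| * nrm x.
  exact: le_trans (S_le x) (ler_wpM2r (hnorm_ge0 x) (ler_norm M)).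
have [-> | Sy_neq0] := eqVneq (nrm (Sst y)) 0; first by rewrite mulr_ge0 ?hnorm_ge0.
have Sy_gt0 : 0 < nrm (Sst y) by rewrite lt_def Sy_neq0 hnorm_ge0.
rewrite -(ler_pM2r Sy_gt0) -expr2 sqr_hnorm /rip -S_adjoint -/(rip _ _).
apply: le_trans (rip_le_hnormM _ _) _.
by rewrite [leRHS]mulrAC ler_wpM2r ?hnorm_ge0 ?S_le_abs.
Qed.

Local Notation A := (fun x => 2^-1 *: (S x + Sst x)).
Local Notation C := (fun x => (2 * 'i)^-1 *: (S x - Sst x)).

Lemma re_part_bounded_positive : positive_op ip A -> bounded_positive_op A.
Proof.
split=> //.
- exact: (linear_scale_add _ S_linear adjoint_linear).
- exact: (bounded_scale_add _ S_bounded adjoint_bounded).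
move=> x y /=; rewrite ipZl ipZr ipDl ipDr S_adjoint adjoint_ip //.
by rewrite fmorphV rmorphMn rmorph1 addrC.
Qed.

Lemma im_part_bounded_positive : positive_op ip C -> bounded_positive_op C.
Proof.
have Sst_linear := adjoint_linear.
split=> //.
- exact: (linear_scale_add _ S_linear (linear_opp Sst_linear)).
- exact: (bounded_scale_add _ S_bounded (bounded_opp adjoint_bounded)).
move=> x y /=; rewrite ipZl ipZr ipBl ipBr S_adjoint adjoint_ip //.
rewrite fmorphV rmorphM /= conjCi conjC_nat.
by field; rewrite neq0Ci.
Qed.

Lemma self_commutator_cartesian x :
  Sst (S x) - S (Sst x) = (2 * 'i) *: (A (C x) - C (A x)).
Proof.
have Sst_linear := adjoint_linear.
apply: ip_injl => z /=.
rewrite !(linB S_linear, linD S_linear, linZ S_linear).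
rewrite !(linB Sst_linear, linD Sst_linear, linZ Sst_linear).
by rewrite !(ipBl, ipDl, ipZl); field; rewrite neq0Ci.
Qed.

Lemma opnorm_self_commutator_le : positive_op ip A -> positive_op ip C ->
  opnorm ip (fun x => Sst (S x) - S (Sst x)) <= opnorm ip A * opnorm ip C.
Proof.
move=> /re_part_bounded_positive A_bpos /im_part_bounded_positive C_bpos.
have [A_lin A_bnd _ _] := A_bpos; have [C_lin C_bnd _ _] := C_bpos.
have ac_ge0 : 0 <= opnorm ip A * opnorm ip C by rewrite mulr_ge0 ?opnorm_ge0.
apply: opnorm_le_ub => x x_le1; rewrite self_commutator_cartesian hnormZ.
have -> : Normc.normc (2 * 'i : R[i]) = 2.
  by apply: complexI; rewrite normcE normrM normCi mulr1 normr_nat rmorph_nat.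
apply: le_trans (ler_wpM2l _ (hnorm_commutator_le x A_bpos C_bpos)) _ => //.
by rewrite mulrA mulrCA divff ?pnatr_eq0 // mulr1 ler_piMr.
Qed.
End Cartesian.
End InnerProduct.

Theorem mainTheorem3 (R : realType) (V : lmodType R[i]) (ip : V -> V -> R[i])
    (S Sst : V -> V) :
  is_separable_hilbert ip ->
  bounded_linear ip S ->
  is_adjoint ip S Sst ->
  let A := fun x => 2^-1 *: (S x + Sst x) in
  let C := fun x => (2 * 'i)^-1 *: (S x - Sst x) in
  positive_op ip A ->
  positive_op ip C ->
  opnorm ip (fun x => Sst (S x) - S (Sst x))
    <= 2^-1 * (opnorm ip A ^+ 2 + opnorm ip C ^+ 2).
Proof.
move=> [[ip_lin ip_conj ip_ge0 ip_eq0] _ _] [S_lin S_bnd] S_adj A C A_pos C_pos.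
apply: le_trans (opnorm_self_commutator_le _ _ _ ip_lin ip_conj ip_ge0 ip_eq0 _ _
                   S_lin S_bnd S_adj A_pos C_pos) _.
have := sqr_ge0 (opnorm ip A - opnorm ip C); nra.
Qed.
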